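(* Let $X,Y\subset\mathbb{C}$ (with the Euclidean metric) and let $f:X\to Y$ be a homeomorphism, where $X$ is of bounded turning. Then $f$ is quasisymmetric if and only if there is a constant $C$ such that for every $x\in X$ and every $r>0$ the set $f(B(x,r))$ is $C$-roundish at $f(x)$.
   Context: $B(x,r)=\{y\in X:|y-x|\le r\}$ is the closed ball in $X$. $X$ is of bounded turning if there is $L>0$ such that any $z_1,z_2\in X$ are joined by a curve $[z_1,z_2]\subset X$ with $\operatorname{diam}[z_1,z_2]\le L|z_1-z_2|$. For $S\subset Y$ and $y\in S$, the inradius is $\operatorname{inr}(S,y)=\inf\{|y-w|:w\in Y\setminus S\}$; $S$ is $C$-roundish at $y$ if $\operatorname{diam}S\le C\operatorname{inr}(S,y)$. A homeomorphism $f$ is quasisymmetric if there is a homeomorphism $\eta:[0,\infty)\to[0,\infty)$ such that for all $t>0$ and $a,b,x\in X$, $|x-a|\le t|x-b|$ implies $|f(x)-f(a)|\le\eta(t)|f(x)-f(b)|$. *)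

From mathcomp Require Import all_boot all_order all_algebra.
From mathcomp Require Import all_classical all_reals all_analysis.
From mathcomp Require Export complex.
Import Order.TTheory GRing.Theory Num.Theory.

Set Implicit Arguments.
Unset Strict Implicit.
Unset Printing Implicit Defensive.

Local Open Scope classical_set_scope.
Local Open Scope ring_scope.

Section Defs.
Variable R : realType.

Definition cdist (z w : R[i]) : R :=
  Num.sqrt (complex.Re (z - w) ^+ 2 + complex.Im (z - w) ^+ 2).

Definition rdist (a b : R) : R := `|a - b|.

(* f is a homeomorphism from S onto T (metric spaces with distances dA, dB):
   f maps S into T, is a bijection S -> T, is continuous on S, and its
   inverse is continuous on T (stated at the point f x, using that every
   point of T is of the form f x'). *)
Definition homeo_between {A B : Type} (dA : A -> A -> R) (dB : B -> B -> R)
  (S : set A) (T : set B) (f : A -> B) : Prop :=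
  [/\ (forall x, S x -> T (f x)),
      (forall x y, S x -> S y -> f x = f y -> x = y),
      (forall y, T y -> exists2 x, S x & f x = y),
      (forall x, S x -> forall e, 0 < e -> exists2 d, 0 < d &
          forall x', S x' -> dA x' x < d -> dB (f x') (f x) < e) &
      (forall x, S x -> forall e, 0 < e -> exists2 d, 0 < d &
          forall x', S x' -> dB (f x') (f x) < d -> dA x' x < e)].

Definition diam (S : set R[i]) : \bar R :=
  ereal_sup [set e | exists a b, [/\ S a, S b & e = (cdist a b)%:E]].

(* inradius inr(S,y) = inf { |y - w| : w in Y \ S } (= +oo if Y \ S empty) *)
Definition inr (Y S : set R[i]) (y : R[i]) : \bar R :=
  ereal_inf [set e | exists2 w, (Y `\` S) w & e = (cdist y w)%:E].

Definition roundish (Y : set R[i]) (C : R) (S : set R[i]) (y : R[i]) : Prop :=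
  (diam S <= C%:E * inr Y S y)%E.

Definition cball (X : set R[i]) (x : R[i]) (r : R) : set R[i] :=
  [set y | X y /\ cdist y x <= r].

Definition curve_in (X : set R[i]) (z1 z2 : R[i]) (gamma : R -> R[i]) : Prop :=
  [/\ gamma 0 = z1, gamma 1 = z2,
      (forall t, 0 <= t <= 1 -> X (gamma t)) &
      (forall t, 0 <= t <= 1 -> forall e, 0 < e -> exists2 d, 0 < d &
         forall s, 0 <= s <= 1 -> `|s - t| < d -> cdist (gamma s) (gamma t) < e)].

Definition bounded_turning (X : set R[i]) : Prop :=
  exists2 L : R, 0 < L & forall z1 z2, X z1 -> X z2 ->
    exists gamma, curve_in X z1 z2 gamma /\
      Order.le (diam (gamma @` [set t | 0 <= t <= 1])) ((L * cdist z1 z2)%:E).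

Definition quasisymmetric (X : set R[i]) (f : R[i] -> R[i]) : Prop :=
  exists eta : R -> R,
    homeo_between rdist rdist [set t | 0 <= t] [set t | 0 <= t] eta /\
    forall t, 0 < t -> forall a b x, X a -> X b -> X x ->
      cdist x a <= t * cdist x b -> cdist (f x) (f a) <= eta t * cdist (f x) (f b).

End Defs.

(* Roundish images of balls give a weak quasisymmetry bound:
   |f x - f a| <= H |f x - f b| whenever |x - a| < |x - b|.  Joining points by
   short curves and using that a disc of the plane contains few pairwise
   separated points, this upgrades to two estimates: ratio 2 in the domain is
   distorted by at most a constant K, and some small ratio t0 contracts by 1/2.
   Chaining these along curves bounds the distortion at ratio 2^m by K^m and at
   ratio t0^m by 2^-m, which a control function of the form
   2 K t^(1/2^j) + K t^(k+1) + t dominates.  Conversely, a quasisymmetric f maps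
   B(x, r) into the disc of radius eta(1) |f x - f w| around f x for every w
   outside the ball, so the image is (2 eta(1) + 1)-roundish. *)

From mathcomp Require Import all_boot all_order all_algebra.
From mathcomp Require Import all_classical all_reals all_analysis.
From mathcomp Require Import complex.
From mathcomp Require Import ring lra.
Import Order.TTheory GRing.Theory Num.Theory.
Import numFieldNormedType.Exports.
Local Open Scope classical_set_scope.
Local Open Scope ring_scope.

Section EuclideanPlane.
Context {R : realType}.
Implicit Types x y z : R[i].

Lemma cdistE x y : (cdist x y)%:C%C = `|x - y|.
Proof. by rewrite normc_def. Qed.

Lemma cdist_ge0 x y : 0 <= cdist x y.
Proof. exact: sqrtr_ge0. Qed.

Lemma cdistC x y : cdist x y = cdist y x.
Proof. by apply: complexI; rewrite !cdistE distrC. Qed.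

Lemma cdist_triangle x y z : cdist x z <= cdist x y + cdist y z.
Proof. by rewrite -lecR rmorphD /= !cdistE ler_distD. Qed.

Lemma cdistxx x : cdist x x = 0.
Proof. by apply: complexI; rewrite cdistE subrr normr0. Qed.

Lemma cdist_eq0 x y : (cdist x y == 0) = (x == y).
Proof.
apply/eqP/eqP => [xy|->]; last exact: cdistxx.
by apply/eqP; rewrite -subr_eq0 -normr_eq0 -cdistE xy.
Qed.

Lemma cdist_gt0 x y : (0 < cdist x y) = (x != y).
Proof. by rewrite lt_neqAle cdist_ge0 andbT eq_sym cdist_eq0. Qed.

Lemma cdist_le0 x y : (cdist x y <= 0) = (x == y).
Proof. by rewrite -cdist_eq0 eq_le cdist_ge0 andbT. Qed.

Lemma cdist_far_lt x y z : 0 < cdist x y -> 3 * cdist x y <= cdist x z ->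
  cdist y x < cdist y z.
Proof. by rewrite (cdistC y x); have := cdist_triangle x y z; lra. Qed.

Lemma ler_dist_cdist x y z : `|cdist x y - cdist x z| <= cdist y z.
Proof.
have := cdist_triangle x y z; have := cdist_triangle x z y; rewrite (cdistC z y).
by rewrite ler_norml => *; apply/andP; split; lra.
Qed.

Lemma cdist_Re x y : `|complex.Re x - complex.Re y| <= cdist x y.
Proof.
rewrite /cdist -(sqrtr_sqr (_ - _)) ler_sqrt ?addr_ge0 ?sqr_ge0 //.
by rewrite -raddfB /= lerDl sqr_ge0.
Qed.

Lemma cdist_Im x y : `|complex.Im x - complex.Im y| <= cdist x y.
Proof.
rewrite /cdist -(sqrtr_sqr (_ - _)) ler_sqrt ?addr_ge0 ?sqr_ge0 //.
by rewrite -raddfB /= lerDr sqr_ge0.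
Qed.

Lemma cdist_lt_coord x y d :
  `|complex.Re x - complex.Re y| < d / 2 ->
  `|complex.Im x - complex.Im y| < d / 2 -> cdist x y < d.
Proof.
move=> hRe hIm; have d0 : 0 < d by have := le_lt_trans (normr_ge0 _) hRe; lra.
rewrite /cdist -(ger0_norm (ltW d0)) -sqrtr_sqr ltr_sqrt ?exprn_gt0 // !raddfB.
have sqr_lt a : `|a| < d / 2 -> a ^+ 2 < (d / 2) ^+ 2.
  move=> ha; rewrite -real_normK ?num_real // ltr_pXn2r ?nnegrE //.
  exact: le_trans (normr_ge0 a) (ltW ha).
apply: (lt_le_trans (ltrD (sqr_lt _ hRe) (sqr_lt _ hIm))).
by rewrite -subr_ge0 (_ : _ - _ = d ^+ 2 / 2) ?divr_ge0 ?sqr_ge0 //; field.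
Qed.

Lemma truncn_eq_dist_lt1 {a b : R} : 0 <= a -> 0 <= b ->
  Num.truncn a = Num.truncn b -> `|a - b| < 1.
Proof.
move=> a0 b0 ab; have /andP[a1 a2] := truncn_itv a0.
have /andP[b1 b2] := truncn_itv b0; move: a1 a2 b1 b2.
by rewrite ab -natr1 ltr_norml => *; apply/andP; split; lra.
Qed.

Lemma truncn_grid {a c rad s : R} : 0 < s -> `|a - c| <= rad ->
  0 <= (a - c + rad) / s /\
  (Num.truncn ((a - c + rad) / s) <= Num.truncn (2 * rad / s))%N.
Proof.
rewrite ler_norml => s0 /andP[ac1 ac2].
split; first by apply: divr_ge0; [lra | exact: ltW].
by apply: le_truncn; rewrite ler_pM2r ?invr_gt0 //; lra.
Qed.

(* Cells of side [dl / 2] of a grid over the square of side [2 rad] containing the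
   ball each contain at most one of the points. *)
Lemma packing_bound {c : R[i]} {rad dl : R} {n : nat} {p : nat -> R[i]} :
  0 < dl -> (forall i, (i < n)%N -> cdist (p i) c <= rad) ->
  (forall i j, (i < j < n)%N -> dl <= cdist (p i) (p j)) ->
  (n <= (Num.truncn (4 * rad / dl)).+1 ^ 2)%N.
Proof.
move=> dl0 p_in p_sep; set s := dl / 2; have s0 : 0 < s by rewrite divr_gt0.
have -> : 4 * rad / dl = 2 * rad / s by rewrite /s; field; rewrite gt_eqF.
set k := Num.truncn _.
pose ix i := Num.truncn ((complex.Re (p i) - complex.Re c + rad) / s).
pose iy i := Num.truncn ((complex.Im (p i) - complex.Im c + rad) / s).
have gridx i (hi : (i < n)%N) :=
  truncn_grid s0 (le_trans (cdist_Re _ _) (p_in i hi)).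
have gridy i (hi : (i < n)%N) :=
  truncn_grid s0 (le_trans (cdist_Im _ _) (p_in i hi)).
pose F (i : 'I_n) : 'I_k.+1 * 'I_k.+1 := (inord (ix i), inord (iy i)).
suff /leq_card : injective F by rewrite card_prod !card_ord -mulnn.
have coord_close u v w :
    `|(u - w + rad) / s - (v - w + rad) / s| < 1 -> `|u - v| < s.
  rewrite (_ : _ - _ = (u - v) / s); last by field; rewrite gt_eqF.
  by rewrite normrM normfV (gtr0_norm s0) ltr_pdivrMr // mul1r.
move=> i j [/(congr1 val) + /(congr1 val)].
have hi := ltn_ord i; have hj := ltn_ord j.
have [[xi0 xik] [xj0 xjk]] := (gridx i hi, gridx j hj).
have [[yi0 yik] [yj0 yjk]] := (gridy i hi, gridy j hj).
rewrite /= !inordK ?ltnS // => /(truncn_eq_dist_lt1 xi0 xj0)/coord_close dx.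
move=> /(truncn_eq_dist_lt1 yi0 yj0)/coord_close dy.
have close := cdist_lt_coord (p i) (p j) dl dx dy.
apply/val_inj/eqP; apply: contraTT close => ij; rewrite -leNgt.
case: ltngtP ij => // ij' _; [|rewrite cdistC]; apply: p_sep.
  by rewrite ij' hj.
by rewrite ij' hi.
Qed.
End EuclideanPlane.

Section Curves.
Context {R : realType}.

Definition continuous_on (X : set R[i]) (h : R[i] -> R[i]) := forall x, X x ->
  forall e, 0 < e -> exists2 d, 0 < d &
    forall x', X x' -> cdist x' x < d -> cdist (h x') (h x) < e.

Lemma continuous_on_id X : continuous_on X id.
Proof. by move=> x _ e e0; exists e. Qed.

Section OnACurve.
Context {X : set R[i]} {z1 z2 : R[i]} {g : R -> R[i]}.
Hypothesis gX : curve_in X z1 z2 g.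

Lemma curve_inP t : 0 <= t <= 1 -> X (g t).
Proof. by case: gX => _ _ + _; apply. Qed.

Lemma curve_cdist_le M t : Order.le (diam (g @` [set t | 0 <= t <= 1])) M%:E ->
  0 <= t <= 1 -> cdist (g t) z1 <= M.
Proof.
case: gX => g0 _ _ _ gM t01; rewrite -lee_fin (le_trans _ gM) //.
apply: ereal_sup_ubound; exists (g t), (g 0).
by split; [exists t | exists 0; rewrite //= lexx ler01 | rewrite g0].
Qed.

Lemma curve_ivt h c v : continuous_on X h ->
  cdist (h c) (h z1) <= v <= cdist (h c) (h z2) ->
  exists2 t, 0 <= t <= 1 & cdist (h c) (h (g t)) = v.
Proof.
case: gX => g0 g1 _ gc hc; rewrite -g0 -g1 => hv.
have : {within `[0, 1], continuous (fun t => cdist (h c) (h (g t)))}.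
  apply/subspace_continuousP => t; rewrite /= in_itv /= => t01.
  apply/cvgrPdist_lt => e e0; have [d1 d10 hd1] := hc _ (curve_inP _ t01) e e0.
  have [d2 d20 hd2] := gc t t01 d1 d10.
  apply/nbhs_ballP; exists d2 => //= s; rewrite /ball /= in_itv /= distrC => st s01.
  rewrite (le_lt_trans (ler_dist_cdist _ _ _)) // cdistC.
  exact: hd1 _ (curve_inP _ s01) (hd2 s s01 st).
case/(IVT (v := v) ler01) => [|t]; last by rewrite in_itv /=; exists t.
by case/andP: hv => h0 h1; rewrite ge_min h0 le_max h1 orbT.
Qed.

Lemma curve_levels h c n (v : nat -> R) : continuous_on X h ->
  (forall i, (i < n)%N -> cdist (h c) (h z1) <= v i <= cdist (h c) (h z2)) ->
  exists T : nat -> R, forall i, (i < n)%N ->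
    0 <= T i <= 1 /\ cdist (h c) (h (g (T i))) = v i.
Proof.
move=> hc hv; suff /boolp.choice[T hT] : forall i, exists t, (i < n)%N ->
    0 <= t <= 1 /\ cdist (h c) (h (g t)) = v i by exists T.
move=> i; have [ni|] := ltnP i n; last by exists 0.
by have [t t01 ht] := curve_ivt _ _ _ hc (hv i ni); exists t.
Qed.
End OnACurve.
End Curves.

Section ControlFunction.
Context {R : realType}.
Implicit Types (s t u x y : R) (j k : nat).

Lemma pow2_bracket y : 1 < y -> exists m, 2 ^+ m < y <= 2 ^+ m.+1.
Proof.
move=> y1; have exP : exists n, y <= 2 ^+ n.+1.
  exists (Num.truncn y); rewrite (le_trans (ltW (truncnS_gt y))) // -natrX ler_nat.
  exact/ltnW/ltn_expl.
case: (ex_minnP exP) => m ym minm.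
exists m; rewrite ym andbT.
case: m ym minm => [|m] _ minm; first by rewrite expr0.
by rewrite ltNge; apply/negP => /minm; rewrite ltnn.
Qed.

Lemma half_pow_bracket u : 0 < u < 1 -> exists m, 2^-1 ^+ m.+1 <= u < 2^-1 ^+ m.
Proof.
case/andP=> u0 u1; have [|m /andP[m1 m2]] := pow2_bracket u^-1.
  by rewrite invf_gt1.
have pow2_pos n : (2 ^+ n : R) \is Num.pos by rewrite posrE exprn_gt0.
exists m; rewrite !exprVn invf_ple ?pow2_pos ?posrE // m2 /=.
by rewrite invf_pgt ?pow2_pos ?posrE.
Qed.

Lemma half_pow_le (t0 : R) : 0 < t0 -> exists j, 2^-1 ^+ (2 ^ j) <= t0.
Proof.
move=> t00; exists (Num.truncn t0^-1).
have pow2_pos n : (2 ^+ n : R) \is Num.pos by rewrite posrE exprn_gt0.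
rewrite exprVn invf_ple ?pow2_pos ?posrE // (le_trans (ltW (truncnS_gt _))) //.
rewrite -natrX ler_nat; set j := Num.truncn _.
exact: ltn_trans (ltn_expl _ (ltnSn 1)) (ltn_expl _ (ltnSn 1)).
Qed.

Definition iter_sqrt j t := iter j (@Num.sqrt R) t.

Lemma iter_sqrt_ge0 j t : 0 <= t -> 0 <= iter_sqrt j t.
Proof. by case: j => [//|j] _; rewrite /iter_sqrt iterS sqrtr_ge0. Qed.

Lemma iter_sqrt0 j : iter_sqrt j 0 = 0.
Proof.
by elim: j => [//|j IH]; rewrite /iter_sqrt iterS -/(iter_sqrt j 0) IH sqrtr0.
Qed.

Lemma iter_sqrtK j t : 0 <= t -> iter_sqrt j t ^+ (2 ^ j) = t.
Proof.
move=> t0; elim: j => [|j IH]; first by rewrite expr1.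
by rewrite /iter_sqrt iterS expnS exprM sqr_sqrtr ?iter_sqrt_ge0.
Qed.

Lemma ler_iter_sqrt j s t : 0 <= s -> s <= t -> iter_sqrt j s <= iter_sqrt j t.
Proof.
move=> s0 st; elim: j => [//|j IH].
by rewrite /iter_sqrt !iterS ler_sqrt // iter_sqrt_ge0 // (le_trans s0).
Qed.

Lemma continuous_iter_sqrt j : continuous (iter_sqrt j).
Proof.
elim: j => [|j IH] x; first exact: cvg_id.
exact: continuous_comp (IH x) (@sqrt_continuous R _).
Qed.

Section IncreasingHomeo.
Variable e : R -> R.
Hypothesis e_cont : continuous e.
Hypothesis e0 : e 0 = 0.
Hypothesis e_incr : forall s t, 0 <= s -> s < t -> e s < e t.
Hypothesis e_ge : forall t, 0 <= t -> t <= e t.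

Lemma increasing_le s t : 0 <= s -> s <= t -> e s <= e t.
Proof. by move=> s0; rewrite le_eqVlt => /orP[/eqP->|/(e_incr _ _ s0)/ltW]. Qed.

Lemma increasing_inverse_continuous x eps : 0 <= x -> 0 < eps ->
  exists2 d, 0 < d & forall y, 0 <= y -> `|e y - e x| < d -> `|y - x| < eps.
Proof.
move=> x0 eps0.
pose d2 := if eps <= x then e x - e (x - eps) else e (x + eps) - e x.
have d1_gt0 : 0 < e (x + eps) - e x by rewrite subr_gt0 e_incr // ltrDl.
have d2_gt0 : 0 < d2.
  rewrite /d2; case: ifP => // epsx.
  by rewrite subr_gt0 e_incr ?subr_ge0 // ltrBlDr ltrDl.
exists (Num.min (e (x + eps) - e x) d2); first by rewrite lt_min d1_gt0.
move=> y y0; rewrite lt_min => /andP[lt1 lt2]; rewrite ltNge; apply/negP => far.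
have [xy|yx] := lerP x y.
  move: far lt1; rewrite !ger0_norm ?subr_ge0 ?increasing_le // => far.
  have : e (x + eps) <= e y by apply: increasing_le; lra.
  lra.
move: far lt2; rewrite !ltr0_norm ?subr_lt0 ?e_incr // !opprB => far.
have epsx : eps <= x by lra.
have : e y <= e (x - eps) by apply: increasing_le; lra.
by rewrite /d2 epsx; lra.
Qed.

Lemma homeo_of_increasing :
  homeo_between (@rdist R) (@rdist R) [set t | 0 <= t] [set t | 0 <= t] e.
Proof.
split => [t /= t0|s t /= s0 t0 est|y /= y0|x _ eps eps0|x /= x0 eps eps0].
- by rewrite -e0 increasing_le.
- case: (ltgtP s t) => // st; [have := e_incr _ _ s0 st | have := e_incr _ _ t0 st];
    by rewrite est ltxx.
- have : {within `[0, y], continuous e} by apply: continuous_subspaceT.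
  case/(IVT (v := y) y0) => [|c]; first by rewrite ge_min e0 y0 le_max e_ge ?orbT.
  by rewrite in_itv /= => /andP[c0 _] ecy; exists c.
- have /cvgrPdist_lt/(_ eps eps0)/nbhs_ballP[d d0 hd] := e_cont x.
  exists d => // y _ xy; rewrite /rdist distrC.
  by apply: hd; rewrite /ball /= distrC.
- exact: increasing_inverse_continuous.
Qed.
End IncreasingHomeo.

(* The first term bounds the distortion at ratios [t <= 1], the second at ratios
   [t > 1]; the last makes it a homeomorphism of [[0, +oo)]. *)
Definition qs_control (K : R) k j t := 2 * K * iter_sqrt j t + K * t ^+ k.+1 + t.

Lemma qs_control_homeo K k j : 0 <= K ->
  homeo_between (@rdist R) (@rdist R) [set t | 0 <= t] [set t | 0 <= t]
    (qs_control K k j).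
Proof.
move=> K0; apply: homeo_of_increasing.
- move=> x; apply: cvgD; last exact: cvg_id.
  apply: cvgD; apply: cvgM; [exact: cvg_cst | exact: continuous_iter_sqrt |
    exact: cvg_cst | exact: exprn_continuous].
- by rewrite /qs_control iter_sqrt0 expr0n !mulr0 !addr0.
- move=> s t s0 st; have t0 := le_trans s0 (ltW st).
  apply: (ler_ltD _ st); apply: lerD.
    by rewrite ler_wpM2l ?mulr_ge0 //; apply: ler_iter_sqrt s0 (ltW st).
  by rewrite ler_wpM2l // lerXn2r ?nnegrE // ltW.
- move=> t t0; rewrite /qs_control lerDr addr_ge0 // !mulr_ge0 ?iter_sqrt_ge0 //.
  exact: exprn_ge0.
Qed.
End ControlFunction.

Section Roundish.
Context {R : realType}.
Implicit Types (Y S : set R[i]) (C : R) (y : R[i]).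

Lemma inr_ge0 Y S y : (0 <= inr Y S y)%E.
Proof. by apply: le_ereal_inf_tmp => _ [w _ ->]; rewrite lee_fin cdist_ge0. Qed.

Lemma roundish_le {Y C C' S y} : C <= C' -> roundish Y C S y -> roundish Y C' S y.
Proof. by move=> CC' /le_trans; apply; rewrite lee_wpmul2r ?inr_ge0 ?lee_fin. Qed.

Lemma roundish_cdist_le {Y C S y a w} : 0 <= C -> roundish Y C S y ->
  S y -> S a -> (Y `\` S) w -> cdist y a <= C * cdist y w.
Proof.
move=> C0 rS Sy Sa Sw; have ya : ((cdist y a)%:E <= diam S)%E.
  by apply: ereal_sup_ubound; exists y, a.
have iw : (inr Y S y <= (cdist y w)%:E)%E by apply: ereal_inf_lbound; exists w.
rewrite -lee_fin EFinM (le_trans (le_trans ya rS)) // lee_wpmul2l ?lee_fin //.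
Qed.

Lemma roundish_of_cdist_le Y C S y : 0 < C ->
  (forall w, (Y `\` S) w -> (diam S <= (C * cdist y w)%:E)%E) -> roundish Y C S y.
Proof.
move=> C0 dS; rewrite /roundish -lee_pdivrMl //.
by apply: le_ereal_inf_tmp => _ [w Sw ->]; rewrite lee_pdivrMl // -EFinM dS.
Qed.
End Roundish.

Definition weakly_qs {R : realType} (X : set R[i]) (f : R[i] -> R[i]) (H : R) :=
  forall x a b, X x -> X a -> X b ->
  cdist x a < cdist x b -> cdist (f x) (f a) <= H * cdist (f x) (f b).

(* Quantifiers ordered as in [quasisymmetric], which thus unfolds to
   [exists eta, homeo_between ... eta /\
      forall t, 0 < t -> distorts_by X f t (eta t)]. *)
Definition distorts_by {R : realType} (X : set R[i]) (f : R[i] -> R[i]) (t c : R) :=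
  forall a b x, X a -> X b -> X x ->
  cdist x a <= t * cdist x b -> cdist (f x) (f a) <= c * cdist (f x) (f b).

Section Distortion.
Context {R : realType} {X : set R[i]} {f : R[i] -> R[i]}.

Lemma distorts_by_le {t t' c c' : R} :
  distorts_by X f t c -> t' <= t -> c <= c' -> distorts_by X f t' c'.
Proof.
move=> dtc tt' cc' a b x Xa Xb Xx xa; apply: le_trans (dtc a b x Xa Xb Xx _) _.
  by rewrite (le_trans xa) // ler_wpM2r ?cdist_ge0.
by rewrite ler_wpM2r ?cdist_ge0.
Qed.

Lemma distorts_by_chain {s t c1 c2 : R} {a b x z : R[i]} : 0 <= c1 ->
  distorts_by X f s c1 -> distorts_by X f t c2 -> X a -> X b -> X x -> X z ->
  cdist x z = t * cdist x b -> cdist x a <= s * cdist x z ->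
  cdist (f x) (f a) <= c1 * c2 * cdist (f x) (f b).
Proof.
move=> c10 ds dt Xa Xb Xx Xz xz xa; rewrite -mulrA.
rewrite (le_trans (ds a z x Xa Xz Xx xa)) // ler_wpM2l //.
by apply: dt; rewrite // xz.
Qed.

Lemma weakly_qs_of_roundish {Y : set R[i]} {C : R} : (forall x, X x -> Y (f x)) ->
  (forall x y, X x -> X y -> f x = f y -> x = y) ->
  (forall x r, X x -> 0 < r -> roundish Y C (f @` cball X x r) (f x)) ->
  weakly_qs X f (Num.max C 1).
Proof.
move=> fXY f_inj rC x a b Xx Xa Xb ab.
have H0 : 0 <= Num.max C 1 by rewrite le_max ler01 orbT.
have [->|nxa] := eqVneq x a; first by rewrite cdistxx mulr_ge0 ?cdist_ge0.
have xa0 : 0 < cdist x a by rewrite cdist_gt0.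
have CH : C <= Num.max C 1 by rewrite le_max lexx.
move/(roundish_le CH)/roundish_cdist_le: (rC x _ Xx xa0); apply => //.
- by exists x; rewrite //; split; rewrite // cdistxx cdist_ge0.
- by exists a; rewrite //; split; rewrite // cdistC.
- split; first exact: fXY.
  case=> y [Xy yx] /(f_inj _ _ Xy Xb) yb.
  by move: ab; rewrite -yb (cdistC x y) ltNge yx.
Qed.

Lemma roundish_of_distorts_by {Y : set R[i]} {c : R} : 0 <= c ->
  (forall y, Y y -> exists2 x, X x & f x = y) -> distorts_by X f 1 c ->
  forall x r, X x -> roundish Y (2 * c + 1) (f @` cball X x r) (f x).
Proof.
move=> c0 f_onto dc x r Xx; apply: roundish_of_cdist_le; first lra.
move=> _ [/f_onto[b Xb <-] Sb]; have rb : r < cdist x b.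
  rewrite ltNge; apply/negP => br; apply: Sb.
  by exists b; rewrite //; split; rewrite // cdistC.
have fy y : cball X x r y -> cdist (f x) (f y) <= c * cdist (f x) (f b).
  by case=> Xy yr; apply: dc; rewrite // mul1r cdistC (le_trans yr) // ltW.
apply: ge_ereal_sup => _ [_ [_ [[y1 By1 <-] [y2 By2 <-] ->]]]; rewrite lee_fin.
have := cdist_triangle (f y1) (f x) (f y2); rewrite (cdistC (f y1) (f x)).
have := fy _ By1; have := fy _ By2; have := cdist_ge0 (f x) (f b).
by rewrite mulrDl mul1r -mulrA; lra.
Qed.

Lemma distorts_by_gt1 {K : R} {k : nat} {t : R} : 1 <= K -> K <= 2 ^+ k.+1 ->
  (forall m, distorts_by X f (2 ^+ m.+1) (K ^+ m.+1)) -> 1 < t ->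
  distorts_by X f t (2 ^+ k.+1 * t ^+ k.+1).
Proof.
move=> K1 Kk dK t1; have [m /andP[m1 m2]] := pow2_bracket _ t1.
apply: (distorts_by_le (dK m) m2 _).
have K0 : 0 <= K := le_trans ler01 K1.
rewrite (@le_trans _ _ ((2 ^+ k.+1) ^+ m.+1)) ?lerXn2r ?nnegrE ?exprn_ge0 //.
rewrite exprS exprAC ler_wpM2l ?exprn_ge0 // lerXn2r ?nnegrE ?exprn_ge0 ?ltW //.
exact: lt_trans t1.
Qed.

Lemma distorts_by_le1 {K : R} {j : nat} {t : R} :
  1 <= K -> distorts_by X f 2 K ->
  (forall m, distorts_by X f ((2^-1 ^+ (2 ^ j)) ^+ m.+1) (2^-1 ^+ m.+1)) ->
  0 < t <= 1 -> distorts_by X f t (2 * K * iter_sqrt j t).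
Proof.
move=> K1 dK dhalf /andP[t0 t1]; set u := iter_sqrt j t.
have ut : u ^+ (2 ^ j) = t by apply: iter_sqrtK; apply: ltW.
have u0 : 0 < u.
  rewrite lt_neqAle iter_sqrt_ge0 ?ltW // andbT eq_sym; apply/eqP => u_eq0.
  by move: t0; rewrite -ut u_eq0 expr0n expn_eq0 ltxx.
have uK : 2 * u <= 2 * K * u by rewrite mulrAC ler_peMr // mulr_ge0 // (ltW u0).
have [u_ge|u_lt] := lerP (2^-1) u.
  apply: (distorts_by_le dK _ _); first lra.
  rewrite mulrAC mulrC -[X in X <= _]mulr1 ler_wpM2l ?(le_trans ler01 K1) //; lra.
have [|m /andP[m1 m2]] := half_pow_bracket (2 * u); first by apply/andP; split; lra.
apply: (distorts_by_le (dhalf m) _ _); last exact: le_trans uK.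
rewrite -ut exprAC lerXn2r ?nnegrE ?exprn_ge0 ?ltW //.
by move: m2; rewrite exprS; lra.
Qed.
End Distortion.

Section BoundedTurning.
Context {R : realType} {X : set R[i]} {f : R[i] -> R[i]} {H L : R}.
Hypotheses (H1 : 1 <= H) (L0 : 0 < L).
Hypothesis f_inj : forall x y, X x -> X y -> f x = f y -> x = y.
Hypothesis f_cont : continuous_on X f.
Hypothesis f_wqs : weakly_qs X f H.
Hypothesis X_bt : forall z1 z2, X z1 -> X z2 -> exists gamma,
  curve_in X z1 z2 gamma /\
  Order.le (diam (gamma @` [set t | 0 <= t <= 1])) ((L * cdist z1 z2)%:E).

Lemma exists_at_cdist x y v : X x -> X y -> 0 <= v <= cdist x y ->
  exists2 z, X z & cdist x z = v.
Proof.
move=> Xx Xy v_in; have [g [gX _]] := X_bt _ _ Xx Xy.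
have [|t t01 gt] := curve_ivt gX id x v (continuous_on_id X).
  by rewrite cdistxx.
by exists (g t); first exact: curve_inP gX _ t01.
Qed.

Lemma weakly_qs_contra x a b : X x -> X a -> X b ->
  H * cdist (f x) (f b) < cdist (f x) (f a) -> cdist x b <= cdist x a.
Proof.
by move=> Xx Xa Xb; apply: contraTT; rewrite -ltNge -leNgt; apply: f_wqs.
Qed.

Lemma weakly_qs_sep x p q : X x -> X p -> X q -> 0 < cdist (f x) (f p) ->
  (H + 2) * cdist (f x) (f p) <= cdist (f x) (f q) -> cdist p x <= cdist p q.
Proof.
move=> Xx Xp Xq fxp0 fxq; rewrite leNgt; apply/negP => /(f_wqs _ _ _ Xp Xq Xx).
rewrite (cdistC (f p) (f x)) => fpq; have := cdist_triangle (f x) (f p) (f q).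
by move: fxq; rewrite mulrDl; lra.
Qed.

(* [lam ^+ i.+1 * sig], [i <= N], are distances from [f x] attained by images of
   points of a short curve from [x] to [a]; the points are pairwise far apart
   and too many for the packing bound. *)
Lemma distorts_by_2 : exists2 K, 1 <= K & distorts_by X f 2 K.
Proof.
pose N := ((Num.truncn (8 * L)).+1 ^ 2)%N; pose lam := H + 2.
have lam1 : 1 <= lam by rewrite /lam ler_wpDr.
exists (lam ^+ N.+2); first exact: exprn_ege1.
move=> a b x Xa Xb Xx xa.
have [xb|nxb] := eqVneq x b.
  move: xa; rewrite -xb cdistxx mulr0 cdist_le0 => /eqP <-.
  by rewrite !cdistxx mulr0.
have rho0 : 0 < cdist x b by rewrite cdist_gt0.
have sig0 : 0 < cdist (f x) (f b).
  by rewrite cdist_gt0; apply: contra_neq nxb; apply: f_inj.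
set rho := cdist x b in xa rho0; set sig := cdist (f x) (f b) in sig0 *.
rewrite leNgt; apply/negP => big.
have [g [gX gdiam]] := X_bt _ _ Xx Xa.
have [|T hT] := curve_levels gX f x N.+1 (fun i => lam ^+ i.+1 * sig) f_cont.
  move=> i iN; rewrite cdistxx mulr_ge0 ?exprn_ge0 ?(le_trans ler01 lam1) //=.
    rewrite (le_trans _ (ltW big)) // ler_wpM2r ?(ltW sig0) //.
    by rewrite (ler_weXn2l lam1) // leqW.
  exact: ltW.
pose p i := g (T i).
have Xp i : (i < N.+1)%N -> X (p i) by move=> /hT[/(curve_inP gX)].
have fp i : (i < N.+1)%N -> cdist (f x) (f (p i)) = lam ^+ i.+1 * sig.
  by case/hT.
have p_in i : (i < N.+1)%N -> cdist (p i) x <= 2 * L * rho.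
  move=> /hT[/(curve_cdist_le gX _ _ gdiam) pL _]; rewrite (le_trans pL) //.
  by rewrite -mulrA mulrCA ler_wpM2l ?(ltW L0).
have p_far i : (i < N.+1)%N -> rho <= cdist (p i) x.
  move=> iN; rewrite cdistC (weakly_qs_contra _ _ _ Xx (Xp _ iN) Xb) // fp //.
  by rewrite ltr_pM2r // (lt_le_trans _ (ler_eXnr _ _)) /lam //; lra.
have p_sep i j : (i < j < N.+1)%N -> rho <= cdist (p i) (p j).
  case/andP=> ij jN; have iN := ltn_trans ij jN.
  rewrite (le_trans (p_far _ iN)) //.
  rewrite (weakly_qs_sep _ _ _ Xx (Xp _ iN) (Xp _ jN)) //.
  - by rewrite fp // mulr_gt0 // exprn_gt0 // (lt_le_trans ltr01 lam1).
  - by rewrite !fp // mulrA -exprS ler_wpM2r ?(ltW sig0) // (ler_weXn2l lam1).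
have := packing_bound rho0 p_in p_sep.
by rewrite (_ : 4 * _ / rho = 8 * L) ?ltnn //; field; rewrite gt_eqF.
Qed.

(* If [f a] is not close to [f x], the points of a curve from [x] to [b] at
   distances [3 ^+ i.+1 * cdist x a], [i <= N], have too many pairwise separated
   images in the disc of radius [H * cdist (f x) (f b)] around [f x]. *)
Lemma distorts_by_small : exists2 t0, 0 < t0 & distorts_by X f t0 2^-1.
Proof.
pose N := ((Num.truncn (8 * H ^+ 3)).+1 ^ 2)%N.
have H0 : 0 < H := lt_le_trans ltr01 H1.
have pow3_gt0 n : 0 < 3 ^+ n :> R by rewrite exprn_gt0.
exists (3 ^+ N.+2)^-1; first by rewrite invr_gt0.
move=> a b x Xa Xb Xx xa.
have [<-|nxa] := eqVneq x a; first by rewrite cdistxx mulr_ge0 ?cdist_ge0.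
have sa0 : 0 < cdist x a by rewrite cdist_gt0.
have far : 3 ^+ N.+2 * cdist x a <= cdist x b.
  by rewrite mulrC -ler_pdivlMr // mulrC.
have sig0 : 0 < cdist (f x) (f b).
  rewrite cdist_gt0; apply: contraTneq far => /(f_inj _ _ Xx Xb) <-.
  by rewrite cdistxx -ltNge mulr_gt0.
set sa := cdist x a in sa0 far *; set sig := cdist (f x) (f b) in sig0 *.
rewrite leNgt; apply/negP => big.
have [g [gX _]] := X_bt _ _ Xx Xb.
have [|T hT] :=
    curve_levels gX id x N.+1 (fun i => 3 ^+ i.+1 * sa) (continuous_on_id X).
  move=> i iN; rewrite cdistxx mulr_ge0 ?(ltW (pow3_gt0 _)) ?(ltW sa0) //=.
  rewrite (le_trans _ far) //.
  by rewrite ler_wpM2r ?(ltW sa0) // ler_weXn2l ?ler1n // leqW.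
pose p i := g (T i).
have Xp i : (i < N.+1)%N -> X (p i) by move=> /hT[/(curve_inP gX)].
have xp i : (i < N.+1)%N -> cdist x (p i) = 3 ^+ i.+1 * sa by case/hT.
have fp_in i : (i < N.+1)%N -> cdist (f (p i)) (f x) <= H * sig.
  move=> iN; rewrite cdistC f_wqs //; first exact: Xp.
  by rewrite xp // (lt_le_trans _ far) // ltr_pM2r // ltr_eXn2l ?ltr1n.
have fp_lo i : (i < N.+1)%N -> 2^-1 * sig < H * cdist (f x) (f (p i)).
  move=> iN; rewrite (lt_le_trans big) // f_wqs //; first exact: Xp.
  by rewrite xp // -[ltLHS]mul1r ltr_pM2r // exprn_egt1 ?ltr1n.
have fp_sep i j :
    (i < j < N.+1)%N -> sig / (2 * H ^+ 2) <= cdist (f (p i)) (f (p j)).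
  case/andP=> ij jN; have iN := ltn_trans ij jN.
  have pij : cdist (p i) x < cdist (p i) (p j).
    apply: cdist_far_lt; rewrite !xp // ?mulr_gt0 // mulrA -exprS.
    by rewrite ler_wpM2r ?(ltW sa0) // ler_weXn2l ?ler1n.
  have := f_wqs _ _ _ (Xp _ iN) Xx (Xp _ jN) pij; rewrite cdistC => fij.
  have : 2^-1 * sig < H ^+ 2 * cdist (f (p i)) (f (p j)).
    by rewrite (lt_le_trans (fp_lo _ iN)) // expr2 -mulrA ler_wpM2l ?(ltW H0).
  by rewrite ler_pdivrMr ?mulr_gt0 ?exprn_gt0 //; lra.
have dl0 : 0 < sig / (2 * H ^+ 2) by rewrite divr_gt0 ?mulr_gt0 ?exprn_gt0.
have := packing_bound dl0 fp_in fp_sep.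
by rewrite (_ : 4 * _ / _ = 8 * H ^+ 3) ?ltnn //; field; rewrite !gt_eqF.
Qed.

Lemma distorts_by_pow2 {K : R} : 1 <= K -> distorts_by X f 2 K ->
  forall m, distorts_by X f (2 ^+ m.+1) (K ^+ m.+1).
Proof.
move=> K1 dK; elim=> [|m IH]; first by rewrite !expr1.
move=> a b x Xa Xb Xx xa; have [near|far] := ltrP (cdist x a) (2 * cdist x b).
  rewrite (le_trans (dK a b x Xa Xb Xx (ltW near))) // ler_wpM2r ?cdist_ge0 //.
  exact: ler_eXnr.
have v_in : 0 <= 2 * cdist x b <= cdist x a.
  by rewrite far andbT mulr_ge0 ?cdist_ge0.
have [z Xz xz] := exists_at_cdist x a _ Xx Xa v_in.
rewrite exprSr; apply: (distorts_by_chain _ IH dK Xa Xb Xx Xz xz).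
  exact: exprn_ge0 (le_trans ler01 K1).
by rewrite xz mulrA -exprSr.
Qed.

Lemma distorts_by_pow {t0 : R} : 0 < t0 <= 1 -> distorts_by X f t0 2^-1 ->
  forall m, distorts_by X f (t0 ^+ m.+1) (2^-1 ^+ m.+1).
Proof.
case/andP=> t00 t01 dt; elim=> [|m IH]; first by rewrite !expr1.
move=> a b x Xa Xb Xx xa.
have v_in : 0 <= t0 * cdist x b <= cdist x b.
  by rewrite mulr_ge0 ?ler_piMl ?cdist_ge0 // ltW.
have [z Xz xz] := exists_at_cdist x b _ Xx Xb v_in.
rewrite exprSr; apply: (distorts_by_chain _ IH dt Xa Xb Xx Xz xz).
  by rewrite exprn_ge0 // invr_ge0 ler0n.
by rewrite xz mulrA -exprSr.
Qed.

Lemma quasisymmetric_of_weakly_qs : quasisymmetric X f.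
Proof.
have [K K1 dK] := distorts_by_2.
have [t0 t00 dt0] := distorts_by_small.
have [j tq_le] := half_pow_le _ t00; set tq := 2^-1 ^+ (2 ^ j) in tq_le.
have tq_in : 0 < tq <= 1.
  by rewrite exprn_gt0 ?exprn_ile1 ?invr_ge0 ?invf_le1 ?ler1n.
have dtq := distorts_by_pow tq_in (distorts_by_le dt0 tq_le (lexx _)).
pose k := Num.truncn K.
have Kk : K <= 2 ^+ k.+1.
  by rewrite (le_trans (ltW (truncnS_gt K))) // -natrX ler_nat ltnW // ltn_expl.
have K'0 : 0 <= 2 ^+ k.+1 :> R by rewrite exprn_ge0.
exists (qs_control (2 ^+ k.+1) k j); split; first exact: qs_control_homeo.
move=> t t_gt0; have r0 := iter_sqrt_ge0 j t (ltW t_gt0).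
have Kt0 : 0 <= 2 ^+ k.+1 * t ^+ k.+1 by rewrite mulr_ge0 // exprn_ge0 // ltW.
have [t1|t1] := lerP t 1.
  have t_in : 0 < t <= 1 by rewrite t_gt0.
  apply: (distorts_by_le (distorts_by_le1 K1 dK dtq t_in) (lexx _) _).
  have : 2 * K * iter_sqrt j t <= 2 * 2 ^+ k.+1 * iter_sqrt j t.
    by rewrite ler_wpM2r // ler_wpM2l.
  by rewrite /qs_control; lra.
have dt := distorts_by_gt1 K1 Kk (distorts_by_pow2 K1 dK) t1.
apply: (distorts_by_le dt (lexx _) _).
have : 0 <= 2 * 2 ^+ k.+1 * iter_sqrt j t by rewrite !mulr_ge0.
by rewrite /qs_control; lra.
Qed.
End BoundedTurning.

Theorem lemma3p2 (R : realType) (X Y : set R[i]) (f : R[i] -> R[i]) :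
  homeo_between (@cdist R) (@cdist R) X Y f ->
  bounded_turning X ->
  (quasisymmetric X f <->
   exists C : R, forall (x : R[i]) (r : R), X x -> 0 < r ->
     roundish Y C (f @` cball X x r) (f x)).
Proof.
case=> fXY f_inj f_onto f_cont _ [L L0 X_bt]; split.
- case=> eta [[eta_ge0 _ _ _ _] d_eta]; have eta1 : 0 <= eta 1 := eta_ge0 1 ler01.
  exists (2 * eta 1 + 1) => x r Xx _.
  exact: roundish_of_distorts_by eta1 f_onto (d_eta 1 ltr01) x r Xx.
- case=> C /(weakly_qs_of_roundish fXY f_inj) f_wqs.
  have H1 : 1 <= Num.max C 1 by rewrite le_max lexx orbT.
  exact: quasisymmetric_of_weakly_qs H1 L0 f_inj f_cont f_wqs X_bt.
Qed.
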